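(* Consider the algorithm described in the context, where $\psi$ can be truncated with sets $\mathbb{R}^n=S_0\supset\cdots\supset S_m$. Assume (A.1) $\psi$ is bounded below; (A.2) whenever $g(x)\ne0$ there exist $r,\epsilon>0$ with $\|g(y)\|\ge\epsilon$ on $B_r(x)$; (B.1) $\{x^k\}\subseteq B_R(0)$ for some $R>0$; (B.2) $\sup_k\|B^k\|\le\kappa_B<\infty$; (B.3) for every subsequence $\{k_\ell\}$ with $\{x^{k_\ell}\}$ convergent and $\alpha_{k_\ell}\to0$, $\psi(x^{k_\ell}+\alpha_{k_\ell}\bar s^{k_\ell})-\psi(x^{k_\ell})-\alpha_{k_\ell}\psi'(x^{k_\ell};\bar s^{k_\ell})=o(\alpha_{k_\ell})$; (B.4) for every $\epsilon>0$ there is $\epsilon'>0$ with $\Gamma(x^k)\ge\epsilon\Rightarrow\Gamma(x^k,\bar s^k)\ge\epsilon'$. Suppose the algorithm does not terminate, (C.5) $x^k\to x^*$, and let $i^*$ be such that $x^*\in S_{i^*}\setminus S_{i^*+1}$ ($S_{m+1}=\emptyset$). Let $\mathcal{M}$ be an affine subspace and assume (C.4): for all $x\in S_i$, $y\in S_j$ with $i<j$ (and $y\ne x$), $\Gamma_{\max}(x,(y-x)/\|y-x\|)\le\|y-x\|$; and for every $r\in(0,\Gamma(x^* ))$ there is $\epsilon(r)>0$ with $\Gamma(x)\ge\epsilon(r)$ for all $x\in B_r(x^* )\cap\mathcal{M}$. Then for every $r\in(0,\Gamma(x^* ))$ there are infinitely many $k$ with $x^k\in B_r(x^* )\cap S_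{i^*}$.
   Context: Problem: minimize $\psi=f+\varphi$ where $f:\mathbb{R}^n\to\mathbb{R}$ is continuously differentiable and $\varphi:\mathbb{R}^n\to\mathbb{R}$ is convex. Notation: $\|\cdot\|$ Euclidean norm (Frobenius for matrices), $B_r(x)$ open ball, $\bar v=v/\|v\|$, $\psi'(x;d)$ directional derivative, $\partial\psi(x)=\nabla f(x)+\partial\varphi(x)$; $x$ is stationary if $0\in\partial\psi(x)$. Pseudo-gradient: $g(x)=u(x)d(x)$ where, for non-stationary $x$, $\|d(x)\|=1$, $\psi'(x;d(x))<0$, $u(x)\in[\psi'(x;d(x)),0)$, and for stationary $x$, $d(x)=0$, $u(x)=0$. Safeguards: for $\|d\|=1$, $\Gamma_{\max}(x,d)=\sup\{T>0: t\mapsto\psi(x+td)\text{ is } C^1\text{ on }(0,T)\}$, $\Gamma(x)=\inf_{\|d\|=1}\Gamma_{\max}(x,d)$; a stepsize safeguard $(x,d)\mapsto\Gamma(x,d)\in(0,\infty]$ is fixed. Truncation: $\psi$ can be truncated with data $\mathbb{R}^n=S_0\supset\cdots\supset S_m$, $\delta\in(0,\infty]$, $\kappa>0$, $T:\mathbb{R}^n\times(0,\delta]\to\mathbb{R}^n$ meaning (i) $\Gamma(x)\ge\delta$ on $S_m$; (ii) for $a\in(0,\delta]$, $x\in S_i\setminus S_{i+1}$, $i<m$: if $\Gamma(x)\ge a$ then $T(x,a)=x$, else $T(x,a)\in S_{i+1}$, $\Gamma(T(x,a))\ge a$, $\|T(x,a)-x\|\le\kappa a$. Algorithm: parameters $0<\eta<\eta_1<\eta_2<1$,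 $0<r_1<1<r_2$, $\Delta_{\max}>0$, $\gamma_1,\gamma_2>0$, a positive strictly decreasing summable sequence $(\epsilon_s)$ with $\epsilon_s\le\delta$, a nonincreasing $\ell:(0,\infty)\to[0,\frac12]$ with $\ell(\Delta)\to0$ as $\Delta\to0^+$; start $x^0$, $\Delta_0>0$, counters $c_0=\dots=c_m=0$. Iteration $k$: $g^k=g(x^k)$; stop if $g^k=0$. Choose $B^k\in\mathbb{R}^{n\times n}$, model $m_k(s)=\psi(x^k)+\langle g^k,s\rangle+\frac12\langle s,B^ks\rangle$, Cauchy point $s^k_C=-\alpha^C_kg^k$ with $\alpha^C_k\in\arg\min_{0\le t\le\Delta_k/\|g^k\|}m_k(-tg^k)$. Choose $s^k$, $\|s^k\|\le\Delta_k$, with $m_k(0)-m_k(s^k)\ge\frac{\gamma_1}{2}\|g^k\|\min\{\Delta_k,\gamma_2\|g^k\|\}$ and $m_k(0)-m_k(s^k)\ge(1-\ell(\|s^k\|))(m_k(0)-m_k(s^k_C))$. Let $\rho^1_k=\frac{\psi(x^k)-\psi(x^k+s^k)}{m_k(0)-m_k(s^k)}$. If $\rho^1_k\ge\eta_1$: $\tilde x^k=x^k+s^k$, $\Delta_{k+1}=\min\{\Delta_{\max},r_2\Delta_k\}$ if $\rho^1_k>\eta_2$ and $\Delta_{k+1}=\Delta_k$ otherwise. Stepsize computation (performed for the analysis in every iteration, used by the algorithm when $\rho^1_k<\eta_1$): $\alpha_k=\min\{\Gamma(x^k,\bar s^k),\|s^k\|\}$; if $m_k(0)-m_k(\alpha_k\bar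 s^k)<\frac{\alpha_k}{2\|s^k\|}(m_k(0)-m_k(s^k))$, replace $s^k$ by $s^k_C$ and $\alpha_k=\min\{\Gamma(x^k,\bar s^k_C),\|s^k_C\|\}$; $\rho^2_k=\frac{\psi(x^k)-\psi(x^k+\alpha_k\bar s^k)}{m_k(0)-m_k(\alpha_k\bar s^k)}$. If $\rho^1_k<\eta_1$: $\Delta_{k+1}=r_1\Delta_k$ if $\rho^2_k<\eta_1$, $=\min\{\Delta_{\max},r_2\Delta_k\}$ if $\rho^2_k>\eta_2$, $=\Delta_k$ otherwise; $\tilde x^k=x^k+\alpha_k\bar s^k$ if $\rho^2_k\ge\eta$ and $\tilde x^k=x^k$ otherwise. Truncation step: set $\tilde x=\tilde x^k$ and repeat {find $i$ with $\tilde x\in S_i\setminus S_{i+1}$; if $\Gamma(\tilde x)<\epsilon_{c_i}$ set $\tilde x\leftarrow T(\tilde x,\epsilon_{c_i})$, $c_i\leftarrow c_i+1$; else stop}; $x^{k+1}=\tilde x$. Here $\alpha_k,\bar s^k$ denote the quantities of the stepsize computation. *)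

From HB Require Import structures.
From mathcomp Require Import all_boot all_order all_algebra.
From mathcomp Require Import all_classical all_reals all_analysis.
Set Implicit Arguments. Unset Strict Implicit. Unset Printing Implicit Defensive.
Import Order.TTheory GRing.Theory Num.Theory.
Import numFieldNormedType.Exports.
Local Open Scope classical_set_scope.
Local Open Scope ring_scope.

Definition dotv {R : realType} {n : nat} (u v : 'rV[R]_n) : R :=
  \sum_(i < n) u ord0 i * v ord0 i.
Definition enorm {R : realType} {n : nat} (v : 'rV[R]_n) : R := Num.sqrt (dotv v v).
Definition unitv {R : realType} {n : nat} (v : 'rV[R]_n) : 'rV[R]_n := (enorm v)^-1 *: v.
Definition frob {R : realType} {n : nat} (B : 'M[R]_n) : R :=
  Num.sqrt (\sum_(i < n) \sum_(j < n) B i j ^+ 2).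
Definition quadf {R : realType} {n : nat} (B : 'M[R]_n) (s : 'rV[R]_n) : R :=
  \sum_(i < n) \sum_(j < n) s ord0 i * B i j * s ord0 j.
Definition eball {R : realType} {n : nat} (x : 'rV[R]_n) (r : R) : set 'rV[R]_n :=
  [set y | enorm (y - x) < r].

Definition convex_fun {R : realType} {n : nat} (phi : 'rV[R]_n -> R) : Prop :=
  forall (x y : 'rV[R]_n) (t : R), 0 <= t <= 1 ->
    phi (t *: x + (1 - t) *: y) <= t * phi x + (1 - t) * phi y.

Definition grad {R : realType} {n : nat} (f : 'rV[R]_n -> R) (x : 'rV[R]_n) : 'rV[R]_n :=
  \row_(i < n) ('D_(delta_mx ord0 i) f x : R).

Definition C1 {R : realType} {n : nat} (f : 'rV[R]_n -> R) : Prop :=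
  (forall x, differentiable f x) /\ continuous (grad f).

Definition psi_of {R : realType} {n : nat} (f phi : 'rV[R]_n -> R) : 'rV[R]_n -> R :=
  fun x => f x + phi x.

Definition dirder {R : realType} {n : nat} (psi : 'rV[R]_n -> R) (x d : 'rV[R]_n) : R :=
  lim ((fun t : R => (psi (x + t *: d) - psi x) / t) @ 0^'+).

Definition subdiff {R : realType} {n : nat} (phi : 'rV[R]_n -> R) (x : 'rV[R]_n) : set 'rV[R]_n :=
  [set v | forall y, phi x + dotv v (y - x) <= phi y].

Definition stationary {R : realType} {n : nat} (f phi : 'rV[R]_n -> R) (x : 'rV[R]_n) : Prop :=
  exists2 v, subdiff phi x v & grad f x + v = 0.

(* (u,d) define a pseudo-gradient g = u d *)
Definition pseudo_gradient {R : realType} {n : nat} (f phi : 'rV[R]_n -> R)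
    (u : 'rV[R]_n -> R) (d : 'rV[R]_n -> 'rV[R]_n) : Prop :=
  forall x,
    (~ stationary f phi x ->
       [/\ enorm (d x) = 1, dirder (psi_of f phi) x (d x) < 0
         & dirder (psi_of f phi) x (d x) <= u x < 0]) /\
    (stationary f phi x -> d x = 0 /\ u x = 0).

Definition pg {R : realType} {n : nat} (u : 'rV[R]_n -> R) (d : 'rV[R]_n -> 'rV[R]_n)
  (x : 'rV[R]_n) : 'rV[R]_n := u x *: d x.

Definition C1_on {R : realType} (F : R -> R) (a b : R) : Prop :=
  (forall t, a < t < b -> derivable F t 1) /\
  (forall t, a < t < b -> {for t, continuous (derive1 F)}).

Definition Gmax {R : realType} {n : nat} (psi : 'rV[R]_n -> R) (x d : 'rV[R]_n) : \bar R :=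
  ereal_sup [set T%:E | T in [set T : R | 0 < T /\ C1_on (fun t => psi (x + t *: d)) 0 T]].

Definition Gam {R : realType} {n : nat} (psi : 'rV[R]_n -> R) (x : 'rV[R]_n) : \bar R :=
  ereal_inf [set Gmax psi x d | d in [set d : 'rV[R]_n | enorm d = 1]].

Definition truncatable {R : realType} {n : nat} (psi : 'rV[R]_n -> R) (m : nat)
    (S : nat -> set 'rV[R]_n) (delta : \bar R) (kappa : R)
    (T : 'rV[R]_n -> R -> 'rV[R]_n) : Prop :=
  [/\ S 0%N = setT, (forall i, (i < m)%N -> S i.+1 `<=` S i),
      (0 < delta)%E /\ 0 < kappa,
      (forall x, S m x -> (delta <= Gam psi x)%E) &
      (forall (a : R) x i, 0 < a -> (a%:E <= delta)%E -> (i < m)%N -> S i x -> ~ S i.+1 x ->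
         ((a%:E <= Gam psi x)%E -> T x a = x) /\
         ((Gam psi x < a%:E)%E ->
            [/\ S i.+1 (T x a), (a%:E <= Gam psi (T x a))%E & enorm (T x a - x) <= kappa * a]))].

Record alg_params (R : realType) := AlgParams {
  eta : R; eta1 : R; eta2 : R; r1 : R; r2 : R; Dmax : R; gam1 : R; gam2 : R;
  epsq : nat -> R; ell : R -> R }.

Definition valid_params {R : realType} (P : alg_params R) (delta : \bar R) : Prop :=
  [/\ 0 < eta P < eta1 P /\ eta1 P < eta2 P < 1,
      0 < r1 P < 1 /\ 1 < r2 P,
      [/\ 0 < Dmax P, 0 < gam1 P & 0 < gam2 P],
      [/\ (forall s, 0 < epsq P s), (forall s, epsq P s.+1 < epsq P s),
          cvgn (series (epsq P)) & (forall s, ((epsq P s)%:E <= delta)%E)] &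
      [/\ (forall D, 0 < D -> 0 <= ell P D <= 1 / 2),
          (forall D1 D2, 0 < D1 -> D1 <= D2 -> ell P D2 <= ell P D1) &
          ell P x @[x --> 0^'+] --> 0] ].

(* m_k(0) - m_k(s) where m_k(s) = psi(x) + <g,s> + 1/2 <s,B s> *)
Definition mdec {R : realType} {n : nat} (gk : 'rV[R]_n) (B : 'M[R]_n) (s : 'rV[R]_n) : R :=
  - (dotv gk s + quadf B s / 2).

Definition model {R : realType} {n : nat} (psi : 'rV[R]_n -> R) (x gk : 'rV[R]_n)
   (B : 'M[R]_n) (s : 'rV[R]_n) : R :=
  psi x + dotv gk s + quadf B s / 2.

Definition cauchy_pt {R : realType} {n : nat} (gk : 'rV[R]_n) (aC : R) : 'rV[R]_n := - (aC *: gk).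

Definition alpha0 {R : realType} {n : nat} (Gs : 'rV[R]_n -> 'rV[R]_n -> \bar R)
   (x s : 'rV[R]_n) : R :=
  fine (Order.min (Gs x (unitv s)) (enorm s)%:E).

(* whether s is replaced by the Cauchy point in the stepsize computation *)
Definition use_cauchy {R : realType} {n : nat} (Gs : 'rV[R]_n -> 'rV[R]_n -> \bar R)
   (x gk : 'rV[R]_n) (B : 'M[R]_n) (s : 'rV[R]_n) : bool :=
  mdec gk B (alpha0 Gs x s *: unitv s) < alpha0 Gs x s / (2 * enorm s) * mdec gk B s.

Definition step_dir {R : realType} {n : nat} (Gs : 'rV[R]_n -> 'rV[R]_n -> \bar R)
   (x gk : 'rV[R]_n) (B : 'M[R]_n) (s : 'rV[R]_n) (aC : R) : 'rV[R]_n :=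
  if use_cauchy Gs x gk B s then unitv (cauchy_pt gk aC) else unitv s.

Definition step_len {R : realType} {n : nat} (Gs : 'rV[R]_n -> 'rV[R]_n -> \bar R)
   (x gk : 'rV[R]_n) (B : 'M[R]_n) (s : 'rV[R]_n) (aC : R) : R :=
  if use_cauchy Gs x gk B s then alpha0 Gs x (cauchy_pt gk aC) else alpha0 Gs x s.

(* the truncation loop: trunc_loop x c y c' means that starting from
   (tilde x, counters) = (x, c) the repeat-loop terminates with (y, c') *)
Inductive trunc_loop {R : realType} {n : nat} (psi : 'rV[R]_n -> R) (S : nat -> set 'rV[R]_n)
    (eps : nat -> R) (T : 'rV[R]_n -> R -> 'rV[R]_n) :
    'rV[R]_n -> (nat -> nat) -> 'rV[R]_n -> (nat -> nat) -> Prop :=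
| tl_stop x c i : S i x -> ~ S i.+1 x -> ((eps (c i))%:E <= Gam psi x)%E ->
    trunc_loop psi S eps T x c x c
| tl_step x c i y c' : S i x -> ~ S i.+1 x -> (Gam psi x < (eps (c i))%:E)%E ->
    trunc_loop psi S eps T (T x (eps (c i))) (fun j => if j == i then (c j).+1 else c j) y c' ->
    trunc_loop psi S eps T x c y c'.

(* one (non-terminating) iteration k -> k+1 of the algorithm:
   inputs x = x^k, D = Delta_k, B = B^k, s = s^k (trial step), aC = alpha^C_k,
   counters c; outputs x' = x^{k+1}, D' = Delta_{k+1}, counters c'. *)
Definition iteration {R : realType} {n : nat} (psi : 'rV[R]_n -> R) (g : 'rV[R]_n -> 'rV[R]_n)
    (Gs : 'rV[R]_n -> 'rV[R]_n -> \bar R) (S : nat -> set 'rV[R]_n)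
    (T : 'rV[R]_n -> R -> 'rV[R]_n) (P : alg_params R)
    (x : 'rV[R]_n) (D : R) (B : 'M[R]_n) (s : 'rV[R]_n) (aC : R) (c : nat -> nat)
    (x' : 'rV[R]_n) (D' : R) (c' : nat -> nat) : Prop :=
  let gk := g x in
  let sC := cauchy_pt gk aC in
  let rho1 := (psi x - psi (x + s)) / mdec gk B s in
  let al := step_len Gs x gk B s aC in
  let sb := step_dir Gs x gk B s aC in
  let rho2 := (psi x - psi (x + al *: sb)) / mdec gk B (al *: sb) in
  let Dup := Order.min (Dmax P) (r2 P * D) in
  let xt := if eta1 P <= rho1 then x + s
            else if eta P <= rho2 then x + al *: sb else x in
  [/\
      0 <= aC <= D / enorm gk /\
      (forall t, 0 <= t <= D / enorm gk -> model psi x gk B sC <= model psi x gk B (- (t *: gk))),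
      [/\ enorm s <= D,
          gam1 P / 2 * enorm gk * Order.min D (gam2 P * enorm gk) <= mdec gk B s &
          (1 - ell P (enorm s)) * mdec gk B sC <= mdec gk B s],
      D' = (if eta1 P <= rho1 then (if eta2 P < rho1 then Dup else D)
            else if rho2 < eta1 P then r1 P * D
            else if eta2 P < rho2 then Dup else D) &
      trunc_loop psi S (epsq P) T xt c x' c'].

Definition alg_run {R : realType} {n : nat} (psi : 'rV[R]_n -> R) (g : 'rV[R]_n -> 'rV[R]_n)
    (Gs : 'rV[R]_n -> 'rV[R]_n -> \bar R) (S : nat -> set 'rV[R]_n)
    (T : 'rV[R]_n -> R -> 'rV[R]_n) (P : alg_params R)
    (x : nat -> 'rV[R]_n) (Delta : nat -> R) (Bm : nat -> 'M[R]_n)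
    (s : nat -> 'rV[R]_n) (aC : nat -> R) (c : nat -> nat -> nat) : Prop :=
  [/\ 0 < Delta 0%N, c 0%N = (fun _ => 0%N) &
      forall k, iteration psi g Gs S T P (x k) (Delta k) (Bm k) (s k) (aC k) (c k)
                  (x k.+1) (Delta k.+1) (c k.+1)].

Definition affine_subspace {R : realType} {n : nat} (M : set 'rV[R]_n) : Prop :=
  M !=set0 /\ forall x y (t : R), M x -> M y -> M (t *: x + (1 - t) *: y).

(* If x^k eventually avoids B_r(x^* ) ∩ S_{i^*}, then, as x^k -> x^*, it eventually
   avoids S_{i^*}; descending through the levels we show that it eventually avoids
   every S_j with j <= i^*, which is absurd for S_0 = R^n.  Once x^k stays outside
   S_{j+1}, the truncation loop never again increments the counter c_j, so the
   threshold eps := eps_{c_j} is eventually fixed, and any x^{k+1} in S_j \ S_{j+1}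
   leaves the loop with Gamma(x^{k+1}) >= eps.  Since x^* lies in the deeper level
   S_{i^*}, (C.4) bounds Gamma(x^{k+1}) by Gamma_max(x^{k+1}, direction to x^* ), hence
   by ||x^* - x^{k+1}||, which tends to 0. *)
From HB Require Import structures.
From mathcomp Require Import all_boot all_order all_algebra.
From mathcomp Require Import all_classical all_reals all_analysis.
Set Implicit Arguments. Unset Strict Implicit. Unset Printing Implicit Defensive.
Import Order.TTheory GRing.Theory Num.Theory.
Import numFieldNormedType.Exports.
Local Open Scope classical_set_scope.
Local Open Scope ring_scope.

Section EuclideanNorm.
Variables (R : realType) (n : nat).
Implicit Types (v : 'rV[R]_n) (a : R).

Lemma dotv_ge0 v : 0 <= dotv v v.
Proof. by apply: sumr_ge0 => i _; rewrite -expr2 sqr_ge0. Qed.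

Lemma enormZ a v : enorm (a *: v) = `|a| * enorm v.
Proof.
rewrite /enorm -sqrtr_sqr -sqrtrM ?sqr_ge0 // /dotv mulr_sumr.
by congr Num.sqrt; apply: eq_bigr => i _; rewrite !mxE mulrACA -expr2.
Qed.

Lemma enormN v : enorm (- v) = enorm v.
Proof. by rewrite -scaleN1r enormZ normrN1 mul1r. Qed.

Lemma enorm_eq0 v : (enorm v == 0) = (v == 0).
Proof.
rewrite /enorm sqrtr_eq0 le_eqVlt ltNge dotv_ge0 orbF /dotv psumr_eq0; last first.
  by move=> i _; rewrite -expr2 sqr_ge0.
apply/idP/eqP => [/allP v0|->]; last by apply/allP => i _; rewrite mxE mulr0 eqxx.
apply/matrixP => i j; rewrite ord1 mxE.
by have /implyP/(_ isT) := v0 j (mem_index_enum j); rewrite mulf_eq0 orbb => /eqP.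
Qed.

Lemma enorm_unitv v : v != 0 -> enorm (unitv v) = 1.
Proof.
rewrite -enorm_eq0 => v0.
by rewrite /unitv enormZ ger0_norm ?invr_ge0 ?sqrtr_ge0 // mulVf.
Qed.

Lemma enorm_le_mx_norm v : enorm v <= n.+1%:R * `|v|.
Proof.
have entry_le i : `|v ord0 i| <= `|v|.
  have /mapP[j _ ->] : `|v ord0 i| \in [seq `|v x.1 x.2| | x : 'I_1 * 'I_n].
    by apply/mapP; exists (ord0, i) => //=; rewrite mem_enum.
  by rewrite [`|v|]mx_normrE; apply/bigmax_geP; right; exists j.
rewrite /enorm -[_ * _]ger0_norm // -sqrtr_sqr ler_sqrt ?sqr_ge0 //.
apply: (@le_trans _ _ (\sum_(i < n) `|v| ^+ 2)).
  apply: ler_sum => i _.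
  by rewrite -expr2 -real_normK ?num_real // lerXn2r ?nnegrE.
rewrite big_const_ord iter_addr_0 exprMn -[_ *+ n]mulr_natl.
apply: (ler_wpM2r (sqr_ge0 _)).
by rewrite -natrX ler_nat (leq_trans (leqnSn _)) // expnS expn1 leq_pmulr.
Qed.

Lemma cvg_enorm (x : nat -> 'rV[R]_n) (xs : 'rV[R]_n) : x @ \oo --> xs ->
  forall e : R, 0 < e -> \forall k \near \oo, enorm (x k - xs) < e.
Proof.
move=> /cvgrPdist_lt xs_lim e e0.
near=> k; rewrite -enormN opprB; apply: (le_lt_trans (enorm_le_mx_norm _)).
by rewrite mulrC -ltr_pdivlMr //; near: k; apply: xs_lim; rewrite divr_gt0.
Unshelve. all: by end_near. Qed.

End EuclideanNorm.

Section NestedLevels.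
Variables (R : realType) (n m : nat) (S : nat -> set 'rV[R]_n).
Hypothesis S_nested : forall i, (i < m)%N -> S i.+1 `<=` S i.
Hypothesis S_empty : forall i, (m < i)%N -> S i = set0.

Lemma nested_subset i j : (i <= j)%N -> S j `<=` S i.
Proof.
move=> /subnKC <-; elim: (j - i)%N => [|k IH]; first by rewrite addn0.
move=> y; rewrite addnS => Sy; apply: IH; case: (ltnP (i + k) m) => km.
  exact: S_nested.
by move: Sy; rewrite S_empty.
Qed.

Lemma level_unique i j y : S i y -> ~ S i.+1 y -> S j y -> ~ S j.+1 y -> i = j.
Proof.
move=> Siy Si1y Sjy Sj1y; case: (ltngtP i j) => // [ij|ji].
- by case: Si1y; exact: nested_subset Sjy.
- by case: Sj1y; exact: nested_subset Siy.
Qed.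

End NestedLevels.

Section Truncation.
Variables (R : realType) (n m : nat) (psi : 'rV[R]_n -> R) (S : nat -> set 'rV[R]_n)
  (delta : \bar R) (kappa : R) (T : 'rV[R]_n -> R -> 'rV[R]_n) (eps : nat -> R).
Hypothesis psi_truncatable : truncatable psi m S delta kappa T.
Hypothesis S_empty : forall i, (m < i)%N -> S i = set0.
Hypothesis eps_gt0 : forall s, 0 < eps s.
Hypothesis eps_le_delta : forall s, ((eps s)%:E <= delta)%E.

Let S_nested : forall i, (i < m)%N -> S i.+1 `<=` S i.
Proof. by case: psi_truncatable. Qed.

Lemma truncation_deepens x a i : 0 < a -> (a%:E <= delta)%E -> S i x -> ~ S i.+1 x ->
  (Gam psi x < a%:E)%E -> S i.+1 (T x a).
Proof.
case: psi_truncatable => _ _ _ Gam_Sm trunc a_gt0 a_le_delta Six Si1x Gam_lt_a.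
have im : (i < m)%N.
  case: (ltngtP i m) => // [mi|mi]; first by move: Six; rewrite S_empty.
  move: Six; rewrite mi => /Gam_Sm Gam_ge_delta.
  by move: Gam_lt_a; rewrite ltNge (le_trans a_le_delta Gam_ge_delta).
by have [_ /(_ Gam_lt_a) []] := trunc a x i a_gt0 a_le_delta im Six Si1x.
Qed.

Lemma trunc_loop_subset x c y c' j :
  trunc_loop psi S eps T x c y c' -> S j x -> S j y.
Proof.
elim => // {}x {}c i {}y {}c' Six Si1x Gam_lt _ IH Sjx; apply: IH.
have ji : (j <= i.+1)%N.
  by rewrite leqNgt; apply/negP => ij; apply: Si1x; exact: (nested_subset S_nested S_empty (ltnW ij) Sjx).
by apply: (nested_subset S_nested S_empty ji); exact: truncation_deepens.
Qed.

Lemma trunc_loop_counter x c y c' j :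
  trunc_loop psi S eps T x c y c' -> ~ S j.+1 y -> c' j = c j.
Proof.
elim => // {}x {}c i {}y {}c' Six Si1x Gam_lt loop IH Sj1y.
rewrite IH //; case: eqP => // ji; subst j.
by case: Sj1y; apply: trunc_loop_subset loop _; exact: truncation_deepens.
Qed.

Lemma trunc_loop_exit x c y c' : trunc_loop psi S eps T x c y c' ->
  exists i, [/\ S i y, ~ S i.+1 y & ((eps (c' i))%:E <= Gam psi y)%E].
Proof. by elim => [{}x {}c i Six Si1x Gam_ge|//]; exists i. Qed.

End Truncation.

Lemma Gam_le_Gmax (R : realType) (n : nat) (psi : 'rV[R]_n -> R) (x d : 'rV[R]_n) :
  enorm d = 1 -> (Gam psi x <= Gmax psi x d)%E.
Proof. by move=> d1; apply: ereal_inf_lbound; exists d. Qed.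

Section Run.
Variables (R : realType) (n m : nat) (psi : 'rV[R]_n -> R) (g : 'rV[R]_n -> 'rV[R]_n)
  (Gs : 'rV[R]_n -> 'rV[R]_n -> \bar R) (S : nat -> set 'rV[R]_n)
  (delta : \bar R) (kappa : R) (T : 'rV[R]_n -> R -> 'rV[R]_n) (P : alg_params R)
  (x : nat -> 'rV[R]_n) (Delta : nat -> R) (Bm : nat -> 'M[R]_n)
  (s : nat -> 'rV[R]_n) (aC : nat -> R) (c : nat -> nat -> nat)
  (xstar : 'rV[R]_n) (istar : nat).
Hypothesis psi_truncatable : truncatable psi m S delta kappa T.
Hypothesis S_empty : forall i, (m < i)%N -> S i = set0.
Hypothesis params : valid_params P delta.
Hypothesis run : alg_run psi g Gs S T P x Delta Bm s aC c.
Hypothesis x_cvg : x @ \oo --> xstar.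
Hypothesis S_istar_xstar : S istar xstar.
Hypothesis Gmax_le_dist : forall (i j : nat) (y z : 'rV[R]_n), (i < j)%N -> S i y -> S j z ->
  z != y -> (Gmax psi y (unitv (z - y)) <= (enorm (z - y))%:E)%E.

Let S_nested : forall i, (i < m)%N -> S i.+1 `<=` S i.
Proof. by case: psi_truncatable. Qed.

Let eps_gt0 : forall s, 0 < epsq P s.
Proof. by case: params => _ _ _ []. Qed.

Let eps_le_delta : forall s, ((epsq P s)%:E <= delta)%E.
Proof. by case: params => _ _ _ []. Qed.

Let step_trunc k : exists xt, trunc_loop psi S (epsq P) T xt (c k) (x k.+1) (c k.+1).
Proof. by case: run => _ _ /(_ k) [_ _ _ loop]; eexists; exact: loop. Qed.

Lemma run_counter_eventually_const j : (\forall k \near \oo, ~ S j.+1 (x k)) ->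
  exists c0, \forall k \near \oo, c k j = c0.
Proof.
case=> K _ Sj1x; exists (c K j); exists K => // k /= /subnK <-.
elim: (k - K)%N => // d IH; rewrite addSn -IH.
have [xt loop] := step_trunc (d + K).
apply: (trunc_loop_counter psi_truncatable S_empty eps_gt0 eps_le_delta loop).
by apply: Sj1x; rewrite /= -addSn leq_addl.
Qed.

Lemma Gam_le_dist_to_xstar j y : (j < istar)%N -> S j y -> ~ S j.+1 y ->
  (Gam psi y <= (enorm (xstar - y))%:E)%E.
Proof.
move=> j_lt Sjy Sj1y.
have xstar_neq : xstar != y.
  apply/eqP => eq_y; apply: Sj1y; rewrite -eq_y.
  exact: (nested_subset S_nested S_empty j_lt S_istar_xstar).
apply: le_trans (Gmax_le_dist j_lt Sjy S_istar_xstar xstar_neq).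
by apply: Gam_le_Gmax; rewrite enorm_unitv // subr_eq0.
Qed.

Lemma run_eventually_leaves_level j : (j < istar)%N ->
  (\forall k \near \oo, ~ S j.+1 (x k)) -> \forall k \near \oo, ~ S j (x k).
Proof.
move=> j_lt Sj1x; have [c0 c_const] := run_counter_eventually_const Sj1x.
have [K _ HK] : \forall k \near \oo,
    [/\ c k j = c0, ~ S j.+1 (x k) & enorm (x k - xstar) < epsq P c0].
  by near=> k; split; near: k => //; exact: cvg_enorm.
apply: near_inftyS; exists K => // k /= /leqW /HK [ck Sj1xk near_xstar] Sjxk.
have [xt /trunc_loop_exit [i [Sixk Si1xk]]] := step_trunc k.
rewrite (level_unique S_nested S_empty Sixk Si1xk Sjxk Sj1xk) ck => eps_le_Gam.
have := le_trans eps_le_Gam (Gam_le_dist_to_xstar j_lt Sjxk Sj1xk).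
by rewrite lee_fin -enormN opprB leNgt near_xstar.
Unshelve. all: by end_near. Qed.

Lemma run_eventually_leaves_S0 : (\forall k \near \oo, ~ S istar (x k)) ->
  \forall k \near \oo, ~ S 0 (x k).
Proof.
move=> leaves_istar.
suff leaves t : (t <= istar)%N -> \forall k \near \oo, ~ S (istar - t) (x k).
  by rewrite -(subnn istar); exact: leaves.
elim: t => [_|t IH t_lt]; first by rewrite subn0.
apply: run_eventually_leaves_level; first by rewrite subnSK // leq_subr.
by rewrite subnSK //; apply: IH; exact: ltnW.
Qed.

End Run.
Theorem lemma5p5 (R : realType) (n m : nat)
  (f phi : 'rV[R]_n -> R)
  (u : 'rV[R]_n -> R) (d : 'rV[R]_n -> 'rV[R]_n)
  (Gs : 'rV[R]_n -> 'rV[R]_n -> \bar R)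
  (S : nat -> set 'rV[R]_n) (delta : \bar R) (kappa : R)
  (T : 'rV[R]_n -> R -> 'rV[R]_n)
  (P : alg_params R)
  (x : nat -> 'rV[R]_n) (Delta : nat -> R) (Bm : nat -> 'M[R]_n)
  (s : nat -> 'rV[R]_n) (aC : nat -> R) (c : nat -> nat -> nat)
  (M : set 'rV[R]_n) (xstar : 'rV[R]_n) (istar : nat) :
  (* standing assumptions *)
  C1 f -> convex_fun phi ->
  pseudo_gradient f phi u d ->
  (forall y v, (0 < Gs y v)%E) ->
  truncatable (psi_of f phi) m S delta kappa T ->
  (forall i, (m < i)%N -> S i = set0) ->
  valid_params P delta ->
  (* (x, Delta, B, s, alpha^C, counters) is a run of the algorithm ... *)
  alg_run (psi_of f phi) (pg u d) Gs S T P x Delta Bm s aC c ->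
  (* ... which does not terminate *)
  (forall k, pg u d (x k) != 0) ->
  (* (A.1) *)
  (exists lb : R, forall y, lb <= psi_of f phi y) ->
  (* (A.2) *)
  (forall y, pg u d y != 0 ->
     exists r eps : R, [/\ 0 < r, 0 < eps &
       forall z, eball y r z -> eps <= enorm (pg u d z)]) ->
  (* (B.1) *)
  (exists Rb : R, 0 < Rb /\ forall k, eball 0 Rb (x k)) ->
  (* (B.2) *)
  (exists kB : R, forall k, frob (Bm k) <= kB) ->
  (* (B.3) *)
  (forall kl : nat -> nat, (forall l, (kl l < kl l.+1)%N) ->
     cvgn (fun l => x (kl l)) ->
     (fun l => step_len Gs (x (kl l)) (pg u d (x (kl l))) (Bm (kl l)) (s (kl l)) (aC (kl l)))
        @ \oo --> 0 ->
     (fun l =>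
        let xk := x (kl l) in
        let al := step_len Gs xk (pg u d xk) (Bm (kl l)) (s (kl l)) (aC (kl l)) in
        let sb := step_dir Gs xk (pg u d xk) (Bm (kl l)) (s (kl l)) (aC (kl l)) in
        (psi_of f phi (xk + al *: sb) - psi_of f phi xk - al * dirder (psi_of f phi) xk sb) / al)
        @ \oo --> 0) ->
  (* (B.4) *)
  (forall e : R, 0 < e -> exists2 e' : R, 0 < e' &
     forall k, (e%:E <= Gam (psi_of f phi) (x k))%E ->
       (e'%:E <= Gs (x k) (step_dir Gs (x k) (pg u d (x k)) (Bm k) (s k) (aC k)))%E) ->
  (* (C.5) *)
  x @ \oo --> xstar ->
  S istar xstar -> ~ S istar.+1 xstar ->
  (* M affine, (C.4) *)
  affine_subspace M ->
  (forall (i j : nat) (y z : 'rV[R]_n), (i < j)%N -> S i y -> S j z -> z != y ->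
     (Gmax (psi_of f phi) y (unitv (z - y)) <= (enorm (z - y))%:E)%E) ->
  (forall r : R, 0 < r -> (r%:E < Gam (psi_of f phi) xstar)%E ->
     exists2 e : R, 0 < e &
       forall y, eball xstar r y -> M y -> (e%:E <= Gam (psi_of f phi) y)%E) ->
  (* conclusion *)
  forall r : R, 0 < r -> (r%:E < Gam (psi_of f phi) xstar)%E ->
    forall N : nat, exists k : nat, [/\ (N <= k)%N, eball xstar r (x k) & S istar (x k)].
Proof.
(* Only the truncation data, the run, its limit and the first half of (C.4) matter. *)
move=> _ _ _ _ trunc S_empty params run _ _ _ _ _ _ _ x_cvg S_istar _ _ Gmax_le_dist _
  r r_gt0 _ N.
apply: contrapT => no_late_visit.
have leaves_istar : \forall k \near \oo, ~ S istar (x k).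
  near=> k => S_xk; apply: no_late_visit; exists k; split => //; near: k.
  - exact: nbhs_infty_ge.
  - exact: cvg_enorm.
have [S0_setT _ _ _ _] := trunc.
have [K _ /(_ K (leqnn K))] :=
  run_eventually_leaves_S0 trunc S_empty params run x_cvg S_istar Gmax_le_dist leaves_istar.
by rewrite S0_setT; apply.
Unshelve. all: by end_near. Qed.
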